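(* Let $f:\mathbb{R}^d \to \mathbb{R}$ be concave, with hypograph $f^- = \{(u;z) \in \mathbb{R}^{d+1} : z \leq f(u)\}$. Let $x \in f^-$ and $\lambda \geq 0$. Then for all $y \in M^{\lambda}_{f^-}(x)$ with $y \in f^-$, $$(1 - \lambda)\cdot \mathrm{ray}_{f^-}(x) \leq \mathrm{ray}_{f^-}(y) \leq (1 + \lambda)\cdot \mathrm{ray}_{f^-}(x).$$
   Context: For a point $w = (u;z) \in f^-$, the ray distance $\mathrm{ray}_{f^-}(w) = f(u) - z$ is the length of the segment from $w$ vertically upward (in the direction of the last coordinate) to the boundary of $f^-$. For a convex set $K$, $p \in K$ and $\lambda \geq 0$, the $\lambda$-scaled Macbeath region is $M^{\lambda}_K(p) = p + \lambda\big((K - p) \cap (p - K)\big)$. *)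

(* Points of R^(d+1) are pairs (u, z) : 'rV[R]_d * R. *)
From mathcomp Require Import all_boot all_order all_algebra.
Set Implicit Arguments. Unset Strict Implicit. Unset Printing Implicit Defensive.
Import Order.TTheory GRing.Theory Num.Theory.
Local Open Scope ring_scope.

Definition point (R : pzRingType) (d : nat) := ('rV[R]_d * R)%type.

Definition padd (R : pzRingType) d (p q : point R d) : point R d := (p.1 + q.1, p.2 + q.2).
Definition psub (R : pzRingType) d (p q : point R d) : point R d := (p.1 - q.1, p.2 - q.2).
Definition pscale (R : pzRingType) d (a : R) (p : point R d) : point R d := (a *: p.1, a * p.2).

Definition concave_fun (R : realFieldType) d (f : 'rV[R]_d -> R) : Prop :=
  forall (u v : 'rV[R]_d) (t : R), 0 <= t -> t <= 1 ->
    t * f u + (1 - t) * f v <= f (t *: u + (1 - t) *: v).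

Definition hypograph (R : realFieldType) d (f : 'rV[R]_d -> R) : point R d -> Prop :=
  fun w => w.2 <= f w.1.

Definition ray_hypo (R : realFieldType) d (f : 'rV[R]_d -> R) (w : point R d) : R :=
  f w.1 - w.2.

(* scaled Macbeath region M^lam_K(p) = p + lam ((K - p) ∩ (p - K)) *)
Definition macbeath (R : realFieldType) d (K : point R d -> Prop) (lam : R)
  (p : point R d) : point R d -> Prop :=
  fun y => exists w : point R d,
    (exists k, K k /\ w = psub k p) /\ (exists k, K k /\ w = psub p k) /\
    y = padd p (pscale lam w).

(* The ray distance [ray_hypo f (u, z) = f u - z] is concave (a concave function
   minus a linear one) and nonnegative exactly on the hypograph.  Write the
   Macbeath point as [y = x + lam w] with [x + w] and [x - w] in the hypograph.
   Then [y = lam (x + w) + (1 - lam) x], which gives the lower bound when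
   [lam <= 1] (and it is trivial otherwise), while
   [x = (1 + lam)^-1 y + (1 - (1 + lam)^-1) (x - w)] gives the upper bound. *)
From mathcomp Require Import all_boot all_order all_algebra.
From mathcomp Require Import ring lra.
Import Order.TTheory GRing.Theory Num.Theory.
Local Open Scope ring_scope.

Lemma macbeathP (R : realFieldType) d (K : point R d -> Prop) lam p y :
  macbeath K lam p y ->
  exists w, [/\ K (padd p w), K (psub p w) & y = padd p (pscale lam w)].
Proof.
case=> w [[k1 [Kk1 ->]] [[k2 [Kk2 eqw]] ->]]; exists (psub k1 p); split=> //.
- by rewrite /padd /psub /= !(addrC p.1, addrC p.2) !subrK -surjective_pairing.
- by rewrite eqw /psub /= !subKr -surjective_pairing.
Qed.

Lemma convex_comb_add_scale (R : realFieldType) d (x w : point R d) (lam : R) :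
  padd (pscale lam (padd x w)) (pscale (1 - lam) x) = padd x (pscale lam w).
Proof.
rewrite /padd /pscale /=; congr pair; last by ring.
by apply/rowP => i; rewrite !mxE; ring.
Qed.

Lemma convex_comb_add_scale_sub (R : realFieldType) d (x w : point R d) (lam : R) :
  0 <= lam ->
  padd (pscale (1 + lam)^-1 (padd x (pscale lam w)))
       (pscale (1 - (1 + lam)^-1) (psub x w)) = x.
Proof.
move=> lam_ge0; have lam1_neq0 : 1 + lam != 0 by rewrite gt_eqF // ltr_pwDl.
case: x => u z; rewrite /padd /pscale /psub /=; congr pair; last by field.
by apply/rowP => i; rewrite !mxE; field.
Qed.

Section RayDistance.

Variables (R : realFieldType) (d : nat) (f : 'rV[R]_d -> R).

Lemma ray_hypo_ge0 (w : point R d) : hypograph f w -> 0 <= ray_hypo f w.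
Proof. by rewrite subr_ge0. Qed.

Hypothesis f_concave : concave_fun f.

Lemma ray_hypo_concave (p q : point R d) (t : R) : 0 <= t -> t <= 1 ->
  t * ray_hypo f p + (1 - t) * ray_hypo f q <=
    ray_hypo f (padd (pscale t p) (pscale (1 - t) q)).
Proof.
move=> t_ge0 t_le1; have := f_concave p.1 q.1 t t_ge0 t_le1.
rewrite /ray_hypo /=; lra.
Qed.

Lemma ray_hypo_macbeath_ge (x w : point R d) (lam : R) : 0 <= lam ->
  hypograph f x -> hypograph f (padd x w) ->
  hypograph f (padd x (pscale lam w)) ->
  (1 - lam) * ray_hypo f x <= ray_hypo f (padd x (pscale lam w)).
Proof.
move=> lam_ge0 /ray_hypo_ge0 ray_x /ray_hypo_ge0 ray_xw /ray_hypo_ge0 ray_y.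
have [lam_ge1 | lam_lt1] := lerP 1 lam; first by nra.
have := ray_hypo_concave (padd x w) x lam lam_ge0 (ltW lam_lt1).
rewrite convex_comb_add_scale; nra.
Qed.

Lemma ray_hypo_macbeath_le (x w : point R d) (lam : R) : 0 <= lam ->
  hypograph f (psub x w) ->
  ray_hypo f (padd x (pscale lam w)) <= (1 + lam) * ray_hypo f x.
Proof.
move=> lam_ge0 /ray_hypo_ge0 ray_xw.
have lam1_gt0 : 0 < 1 + lam by lra.
set t := (1 + lam)^-1.
have t_ge0 : 0 <= t by rewrite invr_ge0 ltW.
have t_le1 : t <= 1 by rewrite invr_le1 ?unitf_gt0 //; lra.
have := ray_hypo_concave (padd x (pscale lam w)) (psub x w) t t_ge0 t_le1.
rewrite convex_comb_add_scale_sub // => ray_x.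
have -> : ray_hypo f (padd x (pscale lam w)) =
          (1 + lam) * (t * ray_hypo f (padd x (pscale lam w))).
  by rewrite mulrA divff ?mul1r // gt_eqF.
rewrite ler_pM2l //; nra.
Qed.

End RayDistance.

Theorem lemma10 (R : realFieldType) (d : nat) (f : 'rV[R]_d -> R)
  (hf : concave_fun f) (x : point R d) (hx : hypograph f x)
  (lam : R) (hlam : 0 <= lam) :
  forall y : point R d, macbeath (hypograph f) lam x y -> hypograph f y ->
    (1 - lam) * ray_hypo f x <= ray_hypo f y /\
    ray_hypo f y <= (1 + lam) * ray_hypo f x.
Proof.
move=> y /macbeathP [w [hxw hxmw ->]] hy; split.
- exact: ray_hypo_macbeath_ge.
- exact: ray_hypo_macbeath_le.
Qed.
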